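(* Let $\hat y(x)=\frac1{2\pi}\arg(x)$ on $\Lambda$ and let $f(\xi):=\sum_{b\in\mathcal R_\xi}\psi'(D\hat y_b)$, $\xi\in\Lambda$, be the associated forces. Then $\hat\alpha\in[D\hat y]$ satisfies $\hat\alpha_b\in[-\tfrac13,\tfrac13]$ for all $b\in\mathcal B$, and there is a constant $C$ such that $|f(\xi)|\le C|\xi|^{-3}$ for all $\xi\in\Lambda$. In particular, $|f(\xi)|\le C_1(1+|\xi|)^{-t}$ for some $C_1$ and $t>2$.
   Context: $\mathsf R_6$ rotation by $\pi/3$, $a_1=(1,0)^T$, $a_i=\mathsf R_6^{i-1}a_1$, $\Lambda:=(\tfrac12,\tfrac{\sqrt3}{6})^T+\{ma_1+na_2:m,n\in\mathbb Z\}$. Bonds $\mathcal B=\{(\xi,\eta)\in\Lambda^2:|\xi-\eta|=1\}$ (ordered), $-b=(\eta,\xi)$, $\mathcal R_\xi=\{(\xi,\xi+a_i):i=1,\dots,6\}$, $Dy_b=y(\eta)-y(\xi)$. $[Dy]$ is the set of $\alpha:\mathcal B\to[-\frac12,\frac12]$ with $\alpha_{-b}=-\alpha_b$ and $Dy_b-\alpha_b\in\mathbb Z$. In $\hat y(x)=\frac1{2\pi}\arg(x)$, $x$ is identified with $x_1+ix_2$ and the branch cut is along the positive $x_1$-axis. The potential $\psi\in C(\mathbb R)\cap C^4(\mathbb R\setminus(\mathbb Z+\tfrac12))$ satisfies: ($\psi$1) 1-periodic; ($\psi$2) $\psi$ and $\psi(\tfrac12+\cdot)$ even; ($\psi$3)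 $\psi(r)=0$ iff $r\in\mathbb Z$; ($\psi$4) $\psi''(0)=\mu>0$; ($\psi$5) $\psi(x)\ge\frac12\psi''(0)x^2$ on $[-\frac12,\frac12]$. *)

From Stdlib Require Import Reals Lra ZArith.
From Coquelicot Require Import Coquelicot.
Open Scope R_scope.

Definition pt := (R * R)%type.

Definition enorm (x : pt) : R := sqrt (fst x ^ 2 + snd x ^ 2).

Definition avec (i : nat) : pt :=
  (cos (INR (i - 1) * PI / 3), sin (INR (i - 1) * PI / 3)).

Definition Lambda (x : pt) : Prop :=
  exists m n : Z,
    x = (1/2 + IZR m * fst (avec 1) + IZR n * fst (avec 2),
         sqrt 3 / 6 + IZR m * snd (avec 1) + IZR n * snd (avec 2)).

Definition ptadd (x y : pt) : pt := (fst x + fst y, snd x + snd y).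
Definition ptsub (x y : pt) : pt := (fst x - fst y, snd x - snd y).

Definition bond (xi eta : pt) : Prop :=
  Lambda xi /\ Lambda eta /\ enorm (ptsub xi eta) = 1.

Definition Dy (y : pt -> R) (xi eta : pt) : R := y eta - y xi.

(* [Dy]: alpha : B -> [-1/2,1/2], alpha_{-b} = -alpha_b, Dy_b - alpha_b in Z.
   alpha is represented as a function on pairs of points; only its values
   on bonds matter. *)
Definition in_class (y : pt -> R) (alpha : pt -> pt -> R) : Prop :=
  forall xi eta, bond xi eta ->
    -1/2 <= alpha xi eta <= 1/2 /\
    alpha eta xi = - alpha xi eta /\
    exists k : Z, Dy y xi eta - alpha xi eta = IZR k.

(* arg(x) in [0, 2 pi), x identified with x1 + i x2, branch cut along the
   positive x1-axis (arg = 0 there). Only used for x <> 0. *)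
Definition arg (x : pt) : R :=
  if Rle_dec 0 (snd x) then acos (fst x / enorm x)
  else 2 * PI - acos (fst x / enorm x).

Definition yhat (x : pt) : R := arg x / (2 * PI).

Definition force (psi : R -> R) (xi : pt) : R :=
  sum_f_R0 (fun j => Derive psi (Dy yhat xi (ptadd xi (avec (S j))))) 5.

Definition potential (psi : R -> R) : Prop :=
  (forall x, continuous psi x) /\
  (forall x, (forall k : Z, x <> IZR k + 1/2) ->
     (forall k, (k <= 4)%nat -> ex_derive_n psi k x) /\
     continuous (Derive_n psi 4) x) /\
  (forall x, psi (x + 1) = psi x) /\
  (forall x, psi (- x) = psi x) /\
             (forall x, psi (1/2 + - x) = psi (1/2 + x)) /\
  (forall r, psi r = 0 <-> exists k : Z, r = IZR k) /\
  Derive_n psi 2 0 > 0 /\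
  (forall x, -1/2 <= x <= 1/2 -> psi x >= 1/2 * Derive_n psi 2 0 * x ^ 2).

(* The bond angle [alpha_hat] is the angle under which a bond is seen from the origin,
   divided by [2 PI]; it differs from [Dy yhat] by an integer. Lattice points have norm at
   least [1/sqrt 3], so by the law of cosines this angle is at most [2 PI / 3], which bounds
   [alpha_hat] by [1/3] and makes it the only element of [[Dy yhat]].
   Since [psi'] is 1-periodic and odd, [psi'(a) = mu a + O(a^3)]. Far from the origin the
   bond angle towards [x + a] is [atan] of a tangent of size [O(1/|x|)], so up to [O(|x|^-3)]
   the force is [mu / (2 PI)] times the sum of these tangents over the six neighbours; the
   tangents for [a] and [-a] cancel up to a term [-2 cross x a dot x a / |x|^4], and these
   terms in turn cancel over the hexagon. *)
From Stdlib Require Import Reals ZArith Lra Lia.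
From Coquelicot Require Import Coquelicot.
Open Scope R_scope.

Definition dot (x y : pt) : R := fst x * fst y + snd x * snd y.
Definition cross (x y : pt) : R := fst x * snd y - snd x * fst y.
Definition ptopp (x : pt) : pt := (- fst x, - snd x).

Definition cos_between (x y : pt) : R := dot x y / (enorm x * enorm y).

Definition angle (x y : pt) : R :=
  if Rle_dec 0 (cross x y) then acos (cos_between x y) else - acos (cos_between x y).

Definition alpha_hat (x y : pt) : R := angle x y / (2 * PI).

Lemma enorm_sq x : enorm x ^ 2 = fst x ^ 2 + snd x ^ 2.
Proof. unfold enorm. apply pow2_sqrt. nra. Qed.

Lemma enorm_ge0 x : 0 <= enorm x.
Proof. apply sqrt_pos. Qed.

Lemma dot2_cross2 x y : dot x y ^ 2 + cross x y ^ 2 = enorm x ^ 2 * enorm y ^ 2.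
Proof. rewrite !enorm_sq. unfold dot, cross. ring. Qed.

Lemma Rabs_dot_cross_le x y :
  Rabs (dot x y) <= enorm x * enorm y /\ Rabs (cross x y) <= enorm x * enorm y.
Proof.
  pose proof (dot2_cross2 x y). pose proof (enorm_ge0 x). pose proof (enorm_ge0 y).
  rewrite <- (Rabs_pos_eq (enorm x * enorm y)) by nra.
  split; apply Rsqr_le_abs_0; unfold Rsqr; nra.
Qed.

Lemma cos_sin_acos c s : c ^ 2 + s ^ 2 = 1 -> cos (acos c) = c /\ sin (acos c) = Rabs s.
Proof.
  intro E. assert (Hc : -1 <= c <= 1) by nra.
  rewrite cos_acos, sin_acos by exact Hc. split; [reflexivity|].
  rewrite <- sqrt_Rsqr_abs. f_equal. unfold Rsqr. lra.
Qed.

Lemma cos_sin_arg x : 0 < enorm x ->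
  cos (arg x) = fst x / enorm x /\ sin (arg x) = snd x / enorm x.
Proof.
  intro Hx. pose proof (enorm_sq x) as Hs. set (n := enorm x) in *.
  assert (E : (fst x / n) ^ 2 + (snd x / n) ^ 2 = 1).
  { replace ((fst x / n) ^ 2 + (snd x / n) ^ 2) with ((fst x ^ 2 + snd x ^ 2) / n ^ 2)
      by (field; lra).
    rewrite <- Hs. field. lra. }
  destruct (cos_sin_acos _ _ E) as [Ec Es].
  assert (Hn : 0 < / n) by (apply Rinv_0_lt_compat; exact Hx).
  unfold arg. fold n. destruct (Rle_dec 0 (snd x)).
  - rewrite Ec, Es, Rabs_pos_eq; [split; reflexivity | unfold Rdiv; nra].
  - rewrite cos_minus, sin_minus, cos_2PI, sin_2PI, Ec, Es, Rabs_left by (unfold Rdiv; nra).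
    split; ring.
Qed.

Lemma cos_sin_angle x y : 0 < enorm x -> 0 < enorm y ->
  cos (angle x y) = cos_between x y /\ sin (angle x y) = cross x y / (enorm x * enorm y).
Proof.
  intros Hx Hy. set (p := enorm x * enorm y).
  assert (Hp : 0 < p) by (apply Rmult_lt_0_compat; assumption).
  assert (E : cos_between x y ^ 2 + (cross x y / p) ^ 2 = 1).
  { unfold cos_between. fold p.
    replace ((dot x y / p) ^ 2 + (cross x y / p) ^ 2) with ((dot x y ^ 2 + cross x y ^ 2) / p ^ 2)
      by (field; lra).
    rewrite dot2_cross2. unfold p. field. lra. }
  destruct (cos_sin_acos _ _ E) as [Ec Es].
  assert (Hp' : 0 < / p) by (apply Rinv_0_lt_compat; exact Hp).
  unfold angle. destruct (Rle_dec 0 (cross x y)).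
  - rewrite Ec, Es, Rabs_pos_eq; [split; reflexivity | unfold Rdiv; nra].
  - rewrite cos_neg, sin_neg, Ec, Es, Rabs_left by (unfold Rdiv; nra). split; ring.
Qed.

Lemma cos_sin_eq_mod_2PI a b : cos a = cos b -> sin a = sin b ->
  exists k : Z, a - b = IZR k * (2 * PI).
Proof.
  intros Hc Hs.
  assert (H1 : cos (a - b) = 1).
  { rewrite cos_minus, Hc, Hs. pose proof (sin2_cos2 b). unfold Rsqr in *. lra. }
  assert (H2 : sin ((a - b) / 2) = 0).
  { replace (a - b) with (2 * ((a - b) / 2)) in H1 by field.
    rewrite cos_2a_sin in H1. nra. }
  destruct (sin_eq_0_0 _ H2) as [k Hk]. exists k. lra.
Qed.

Lemma Dy_yhat_alpha_hat x y : 0 < enorm x -> 0 < enorm y ->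
  exists k : Z, Dy yhat x y - alpha_hat x y = IZR k.
Proof.
  intros Hx Hy.
  destruct (cos_sin_arg x Hx) as [cx sx]. destruct (cos_sin_arg y Hy) as [cy sy].
  destruct (cos_sin_angle x y Hx Hy) as [ct st].
  destruct (cos_sin_eq_mod_2PI (arg y - arg x) (angle x y)) as [k Hk].
  - rewrite cos_minus, cx, cy, sx, sy, ct. unfold cos_between, dot. field. lra.
  - rewrite sin_minus, sx, sy, cx, cy, st. unfold cross. field. lra.
  - exists k. unfold Dy, yhat, alpha_hat. pose proof PI_RGT_0.
    apply Rmult_eq_reg_r with (2 * PI); [|lra].
    field_simplify; lra.
Qed.

Lemma angle_swap x y : 0 < enorm x -> 0 < enorm y -> -1 < cos_between x y ->
  angle y x = - angle x y.
Proof.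
  intros Hx Hy Hc.
  assert (Ec : cos_between y x = cos_between x y)
    by (unfold cos_between, dot; f_equal; ring).
  assert (Es : cross y x = - cross x y) by (unfold cross; ring).
  unfold angle. rewrite Ec, Es.
  destruct (Rle_dec 0 (cross x y)); destruct (Rle_dec 0 (- cross x y)); try lra.
  assert (E0 : cross x y = 0) by lra.
  destruct (cos_sin_angle x y Hx Hy) as [Hcos Hsin].
  (* a vanishing cross product forces [cos_between x y = 1], i.e. a zero angle *)
  assert (Hc1 : cos_between x y = 1).
  { rewrite E0, Rdiv_0_l in Hsin. pose proof (sin2_cos2 (angle x y)) as Hpy.
    rewrite Hsin, Hcos in Hpy. unfold Rsqr in Hpy.
    destruct (Rle_dec 0 (cos_between x y)); nra. }
  rewrite Hc1, acos_1. ring.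
Qed.

Lemma acos_le_2PI3 c : -1/2 <= c <= 1 -> acos c <= 2 * (PI / 3).
Proof.
  intro Hc. apply Rnot_lt_le. intro Hlt.
  pose proof (acos_bound c). pose proof PI_RGT_0.
  pose proof (cos_decreasing_1 (2 * (PI / 3)) (acos c) ltac:(lra) ltac:(lra) ltac:(lra) ltac:(lra) Hlt)
    as Hcos.
  rewrite cos_acos, cos_2PI3 in Hcos by lra. lra.
Qed.

Lemma angle_atan x y : 0 < enorm x -> 0 < enorm y -> 0 < dot x y ->
  angle x y = atan (cross x y / dot x y).
Proof.
  intros Hx Hy Hd. destruct (cos_sin_angle x y Hx Hy) as [Hc Hs].
  assert (Hp : 0 < enorm x * enorm y) by nra.
  assert (Hcb : 0 < cos_between x y) by (apply Rdiv_lt_0_compat; assumption).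
  assert (Hac : acos (cos_between x y) < PI / 2).
  { apply Rnot_le_lt. intro Hge. pose proof (acos_bound (cos_between x y)).
    pose proof (cos_le_0 _ Hge ltac:(lra)) as Hle.
    rewrite cos_acos in Hle; [lra|]. rewrite <- Hc. apply COS_bound. }
  assert (Hb : - (PI / 2) < angle x y < PI / 2).
  { pose proof (acos_bound (cos_between x y)).
    unfold angle. destruct (Rle_dec 0 (cross x y)); lra. }
  rewrite <- (atan_tan (angle x y) Hb). f_equal. unfold tan. rewrite Hc, Hs.
  unfold cos_between. field. lra.
Qed.

Lemma sqrt3_sq : sqrt 3 * sqrt 3 = 3.
Proof. apply sqrt_sqrt. lra. Qed.

Lemma avec1 : avec 1 = (1, 0).
Proof.
  unfold avec. replace (INR (1 - 1) * PI / 3) with 0 by (simpl; lra).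
  rewrite cos_0, sin_0. reflexivity.
Qed.

Lemma avec2 : avec 2 = (1/2, sqrt 3 / 2).
Proof.
  unfold avec. replace (INR (2 - 1) * PI / 3) with (PI / 3) by (simpl; lra).
  rewrite cos_PI3, sin_PI3. reflexivity.
Qed.

Lemma avec3 : avec 3 = (-1/2, sqrt 3 / 2).
Proof.
  unfold avec. replace (INR (3 - 1) * PI / 3) with (2 * (PI / 3)) by (simpl; lra).
  rewrite cos_2PI3, sin_2PI3. reflexivity.
Qed.

Lemma avec_add3 k : (1 <= k)%nat -> avec (k + 3) = ptopp (avec k).
Proof.
  intro Hk. unfold avec, ptopp; cbn [fst snd].
  replace (INR (k + 3 - 1) * PI / 3) with (INR (k - 1) * PI / 3 + PI)
    by (replace (k + 3 - 1)%nat with ((k - 1) + 3)%nat by lia; rewrite plus_INR; simpl; lra).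
  rewrite neg_cos, neg_sin. reflexivity.
Qed.

Lemma enorm_avec k : enorm (avec k) = 1.
Proof.
  unfold enorm, avec; cbn [fst snd].
  rewrite <- sqrt_1. f_equal. pose proof (sin2_cos2 (INR (k - 1) * PI / 3)) as E.
  unfold Rsqr in E. lra.
Qed.

Lemma Lambda_coord x : Lambda x <-> exists m n : Z,
  x = (1/2 + IZR m + IZR n / 2, sqrt 3 / 6 + IZR n * sqrt 3 / 2).
Proof.
  unfold Lambda. rewrite avec1, avec2. cbn [fst snd].
  split; intros [m [n E]]; exists m, n; rewrite E; f_equal; field.
Qed.

Lemma Lambda_norm x : Lambda x -> 1/3 <= enorm x ^ 2.
Proof.
  intros [m [n ->]]%Lambda_coord. rewrite enorm_sq. cbn [fst snd].
  (* |x|^2 = (3 (1 + 2m + n)^2 + (1 + 3n)^2) / 12, and the numerator is at least 4 *)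
  assert (Hz : (4 <= 3 * ((1 + 2*m + n) * (1 + 2*m + n)) + (1 + 3*n) * (1 + 3*n))%Z).
  { destruct (Z.eq_dec n 0) as [->|Hn].
    - assert (1 <= (1 + 2*m) * (1 + 2*m))%Z by (destruct (Z_le_gt_dec 0 m); nia). lia.
    - assert (4 <= (1 + 3*n) * (1 + 3*n))%Z by (destruct (Z_le_gt_dec 0 n); nia).
      pose proof (Z.square_nonneg (1 + 2*m + n)). lia. }
  apply IZR_le in Hz. rewrite !plus_IZR, !mult_IZR, !plus_IZR, !mult_IZR in Hz.
  replace ((sqrt 3 / 6 + IZR n * sqrt 3 / 2) ^ 2) with
    ((sqrt 3 * sqrt 3) * ((1 + 3 * IZR n) / 6) ^ 2) by field.
  rewrite sqrt3_sq. simpl in Hz. nra.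
Qed.

Lemma Lambda_enorm_pos x : Lambda x -> 0 < enorm x.
Proof.
  intro Hx. pose proof (Lambda_norm x Hx) as Hn.
  destruct (enorm_ge0 x) as [|E]; [assumption|]. rewrite <- E in Hn. lra.
Qed.

Lemma Lambda_add_lattice x p q : Lambda x ->
  Lambda (ptadd x (IZR p + IZR q / 2, IZR q * sqrt 3 / 2)).
Proof.
  intros [m [n ->]]%Lambda_coord. apply Lambda_coord. exists (m + p)%Z, (n + q)%Z.
  unfold ptadd; cbn [fst snd]. rewrite !plus_IZR. f_equal; field.
Qed.

Lemma avec_lattice k : (1 <= k <= 6)%nat ->
  exists p q : Z, avec k = (IZR p + IZR q / 2, IZR q * sqrt 3 / 2).
Proof.
  intro Hk.
  assert (Hlow : forall k, (1 <= k <= 3)%nat ->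
    exists p q : Z, avec k = (IZR p + IZR q / 2, IZR q * sqrt 3 / 2)).
  { intros [|[|[|[|j]]]] Hj; try lia;
      [exists 1%Z, 0%Z; rewrite avec1 | exists 0%Z, 1%Z; rewrite avec2
      | exists (-1)%Z, 1%Z; rewrite avec3]; f_equal; simpl; field. }
  destruct (Nat.le_gt_cases k 3); [apply Hlow; lia|].
  destruct (Hlow (k - 3)%nat ltac:(lia)) as [p [q E]]. exists (- p)%Z, (- q)%Z.
  replace k with (k - 3 + 3)%nat by lia. rewrite avec_add3, E by lia.
  unfold ptopp; cbn [fst snd]. rewrite !opp_IZR. f_equal; field.
Qed.

Lemma bond_avec x k : Lambda x -> (1 <= k <= 6)%nat -> bond x (ptadd x (avec k)).
Proof.
  intros Hx Hk. split; [exact Hx|split].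
  - destruct (avec_lattice k Hk) as [p [q ->]]. apply Lambda_add_lattice, Hx.
  - rewrite <- (enorm_avec k). unfold enorm, ptsub, ptadd; cbn [fst snd]. f_equal. ring.
Qed.

Lemma bond_cos_between x y : bond x y -> -1/2 <= cos_between x y.
Proof.
  intros [Hx [Hy Hd]].
  pose proof (Lambda_norm x Hx). pose proof (Lambda_norm y Hy).
  pose proof (Lambda_enorm_pos x Hx). pose proof (Lambda_enorm_pos y Hy).
  (* law of cosines with |x - y| = 1 *)
  assert (Hdot : dot x y = (enorm x ^ 2 + enorm y ^ 2 - 1) / 2).
  { pose proof (enorm_sq (ptsub x y)) as E. rewrite Hd in E.
    rewrite !enorm_sq. unfold dot, ptsub in *. cbn [fst snd] in *. lra. }
  unfold cos_between. rewrite Hdot.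
  set (a := enorm x) in *. set (b := enorm y) in *.
  apply Rmult_le_reg_r with (a * b); [nra|].
  field_simplify; nra.
Qed.

Lemma alpha_hat_bond_bound x y : bond x y -> -1/3 <= alpha_hat x y <= 1/3.
Proof.
  intro B. pose proof (bond_cos_between x y B) as Hc.
  destruct B as [Hx [Hy _]].
  destruct (cos_sin_angle x y (Lambda_enorm_pos x Hx) (Lambda_enorm_pos y Hy)) as [Hcos _].
  assert (Hc1 : cos_between x y <= 1) by (rewrite <- Hcos; apply COS_bound).
  pose proof (acos_le_2PI3 (cos_between x y) ltac:(lra)).
  pose proof (acos_bound (cos_between x y)). pose proof PI_RGT_0.
  unfold alpha_hat, angle.
  split; apply Rmult_le_reg_r with (2 * PI); try lra; field_simplify; try lra;
    destruct (Rle_dec 0 (cross x y)); lra.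
Qed.

Lemma in_class_alpha_hat : in_class yhat alpha_hat.
Proof.
  intros x y B. pose proof (alpha_hat_bond_bound x y B).
  pose proof (bond_cos_between x y B).
  destruct B as [Hx [Hy _]].
  pose proof (Lambda_enorm_pos x Hx). pose proof (Lambda_enorm_pos y Hy).
  split; [lra|split].
  - unfold alpha_hat. rewrite angle_swap by lra. field. pose proof PI_RGT_0. lra.
  - apply Dy_yhat_alpha_hat; assumption.
Qed.

Lemma in_class_bond_eq alpha x y : in_class yhat alpha -> bond x y ->
  alpha x y = alpha_hat x y.
Proof.
  intros Hc B. destruct (Hc x y B) as [Hb [_ [k Hk]]].
  pose proof (alpha_hat_bond_bound x y B).
  destruct B as [Hx [Hy _]].
  destruct (Dy_yhat_alpha_hat x y (Lambda_enorm_pos x Hx) (Lambda_enorm_pos y Hy)) as [k' Hk'].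
  (* the two representatives differ by the integer k' - k of absolute value < 1 *)
  assert (E : alpha x y - alpha_hat x y = IZR (k' - k)) by (rewrite minus_IZR; lra).
  assert (H1 : (-1 < k' - k)%Z) by (apply lt_IZR; lra).
  assert (H2 : (k' - k < 1)%Z) by (apply lt_IZR; lra).
  replace (k' - k)%Z with 0%Z in E by lia. lra.
Qed.

Section Potential.

Variable psi : R -> R.
Hypothesis Hpsi : potential psi.

Lemma potential_smooth_near0 c : Rabs c < 1/2 ->
  (forall k, (k <= 4)%nat -> ex_derive_n psi k c) /\ continuous (Derive_n psi 4) c.
Proof.
  intro Hc. apply Hpsi. intros k E. apply Rabs_def2 in Hc.
  assert (H1 : (-1 < k)%Z) by (apply lt_IZR; lra).
  assert (H2 : (k < 0)%Z) by (apply lt_IZR; lra).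
  lia.
Qed.

Lemma potential_locally_smooth_near0 c : Rabs c < 1/2 ->
  locally c (fun y => forall k, (k <= 4)%nat -> ex_derive_n psi k y).
Proof.
  intro Hc. assert (He : 0 < 1/2 - Rabs c) by lra.
  exists (mkposreal _ He). intros y Hy. change R in y. apply potential_smooth_near0.
  change (Rabs (y - c) < 1/2 - Rabs c) in Hy.
  pose proof (Rabs_triang (y - c) c) as Ht. replace (y - c + c) with y in Ht by ring. lra.
Qed.

Lemma potential_shift_IZR k x : psi (x + IZR k) = psi x.
Proof.
  destruct Hpsi as [_ [_ [Hper _]]].
  induction k as [|k IH|k IH] using Z.peano_ind.
  - f_equal. ring.
  - rewrite succ_IZR, <- IH, <- Rplus_assoc. apply Hper.
  - rewrite <- IH, <- Z.sub_1_r, minus_IZR, <- (Hper (x + (IZR k - 1))).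
    f_equal. ring.
Qed.

Lemma Derive_potential_shift_IZR k x : Derive psi (x + IZR k) = Derive psi x.
Proof.
  change (Derive_n psi 1 (x + IZR k) = Derive_n psi 1 x).
  rewrite <- (Derive_n_comp_trans psi 1 x (IZR k)).
  apply Derive_ext. intro y. apply potential_shift_IZR.
Qed.

Lemma Derive_n_potential_opp n t : Rabs t < 1/2 -> (n <= 4)%nat ->
  Derive_n psi n t = (-1) ^ n * Derive_n psi n (- t).
Proof.
  intros Ht Hn. rewrite <- Derive_n_comp_opp.
  - apply Derive_n_ext. intro y. symmetry. apply Hpsi.
  - apply (filter_imp (fun y => forall k, (k <= 4)%nat -> ex_derive_n psi k y)).
    + intros y Hy k Hk. apply Hy. lia.
    + apply potential_locally_smooth_near0. rewrite Rabs_Ropp. exact Ht.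
Qed.

Lemma Derive4_potential_bounded : exists M, 0 <= M /\
  forall t, 0 <= t <= 1/3 -> Rabs (Derive_n psi 4 t) <= M.
Proof.
  assert (Hc : forall c, 0 <= c <= 1/3 -> continuity_pt (Derive_n psi 4) c).
  { intros c Hc. apply continuity_pt_filterlim, potential_smooth_near0.
    rewrite Rabs_pos_eq; lra. }
  destruct (continuity_ab_maj _ 0 (1/3) ltac:(lra) Hc) as [a [Ha _]].
  destruct (continuity_ab_min _ 0 (1/3) ltac:(lra) Hc) as [b [Hb _]].
  exists (Rabs (Derive_n psi 4 a) + Rabs (Derive_n psi 4 b)).
  pose proof (Rabs_pos (Derive_n psi 4 a)). pose proof (Rabs_pos (Derive_n psi 4 b)).
  pose proof (Rle_abs (Derive_n psi 4 a)).
  pose proof (Rle_abs (- Derive_n psi 4 b)) as Hb'. rewrite Rabs_Ropp in Hb'.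
  split; [lra|]. intros t Ht. specialize (Ha t Ht). specialize (Hb t Ht).
  apply Rabs_le. lra.
Qed.

Lemma ex_derive_n_Derive_n1 (f : R -> R) n x :
  ex_derive_n f (S n) x -> ex_derive_n (Derive_n f 1) n x.
Proof.
  destruct n as [|n]; [intros _; exact I|].
  apply ex_derive_ext. intro y. rewrite Derive_n_comp, Nat.add_1_r. reflexivity.
Qed.

(* Taylor expansion of the odd function [psi'] to third order at 0. *)
Lemma Derive_potential_cubic : exists M, 0 <= M /\
  forall a, Rabs a <= 1/3 ->
    Rabs (Derive psi a - Derive_n psi 2 0 * a) <= M * Rabs a ^ 3.
Proof.
  destruct Derive4_potential_bounded as [M [HM HMb]].
  assert (Hodd : forall n, (-1) ^ n = -1 -> (n <= 4)%nat -> Derive_n psi n 0 = 0).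
  { intros n Hs Hn. pose proof (Derive_n_potential_opp n 0) as E.
    rewrite Ropp_0, Hs, Rabs_R0 in E. specialize (E ltac:(lra) Hn). lra. }
  assert (Hpos : forall a, 0 < a <= 1/3 ->
    Rabs (Derive psi a - Derive_n psi 2 0 * a) <= M * a ^ 3).
  { intros a Ha.
    destruct (Taylor_Lagrange (Derive_n psi 1) 2 0 a ltac:(lra)) as [z [Hz E]].
    { intros t Ht k Hk. apply ex_derive_n_Derive_n1, potential_smooth_near0;
        [rewrite Rabs_pos_eq|]; lia || lra. }
    change (Derive psi a) with (Derive_n psi 1 a). rewrite E. cbn [sum_f_R0].
    rewrite !Derive_n_comp. cbn [Nat.add].
    rewrite (Hodd 1%nat), (Hodd 3%nat) by (simpl; lra || lia).
    cbn [fact INR].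
    match goal with |- Rabs ?e <= _ => replace e with (a ^ 3 / 6 * Derive_n psi 4 z) by (simpl; field) end.
    rewrite Rabs_mult, Rabs_pos_eq by (apply Rmult_le_pos; [apply pow_le|]; lra).
    specialize (HMb z ltac:(lra)). assert (0 < a ^ 3) by (apply pow_lt; lra). nra. }
  exists M. split; [exact HM|]. intros a Ha.
  destruct (Rtotal_order a 0) as [Hn|[->|Hp]].
  - rewrite (Rabs_left a) in Ha |- * by lra.
    change (Derive psi a) with (Derive_n psi 1 a).
    rewrite (Derive_n_potential_opp 1 a) by (try rewrite (Rabs_left a); lra || lia).
    specialize (Hpos (- a) ltac:(lra)).
    replace ((-1) ^ 1 * Derive_n psi 1 (- a) - Derive_n psi 2 0 * a)
      with (- (Derive_n psi 1 (- a) - Derive_n psi 2 0 * - a)) by ring.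
    rewrite Rabs_Ropp. exact Hpos.
  - change (Derive psi 0) with (Derive_n psi 1 0).
    rewrite (Hodd 1%nat) by (simpl; lra || lia).
    replace (0 - Derive_n psi 2 0 * 0) with 0 by ring. rewrite Rabs_R0. simpl. lra.
  - rewrite (Rabs_pos_eq a) in Ha |- * by lra. apply Hpos. lra.
Qed.

End Potential.

Lemma force_alpha_hat psi x : potential psi -> Lambda x ->
  force psi x = sum_f_R0 (fun j => Derive psi (alpha_hat x (ptadd x (avec (S j))))) 5.
Proof.
  intros Hpsi Hx. apply sum_eq. intros j Hj.
  destruct (bond_avec x (S j) Hx ltac:(lia)) as [_ [Hy _]].
  destruct (Dy_yhat_alpha_hat x _ (Lambda_enorm_pos x Hx) (Lambda_enorm_pos _ Hy)) as [k Hk].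
  replace (Dy yhat x (ptadd x (avec (S j)))) with (alpha_hat x (ptadd x (avec (S j))) + IZR k)
    by lra.
  apply Derive_potential_shift_IZR, Hpsi.
Qed.

Lemma sum_f_R0_Rabs_le_const (f : nat -> R) n b :
  (forall j, (j <= n)%nat -> Rabs (f j) <= b) -> Rabs (sum_f_R0 f n) <= INR (S n) * b.
Proof.
  intro Hf. eapply Rle_trans; [apply sum_f_R0_triangle|].
  rewrite Rmult_comm, <- sum_cte. apply sum_Rle. exact Hf.
Qed.

(* [tan_step x a] is the tangent of the angle under which the bond from [x] to [x + a]
   is seen from the origin. *)
Definition tan_step (x a : pt) : R := cross x a / (enorm x ^ 2 + dot x a).

Lemma alpha_hat_far x a : 2 <= enorm x -> enorm a = 1 ->
  alpha_hat x (ptadd x a) = atan (tan_step x a) / (2 * PI) /\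
  Rabs (tan_step x a) <= 2 / enorm x.
Proof.
  intros Hx Ha.
  destruct (Rabs_dot_cross_le x a) as [Hdot Hcross]. rewrite Ha, Rmult_1_r in Hdot, Hcross.
  pose proof (proj1 (Rabs_le_between _ _) Hdot).
  set (rho := enorm x) in *.
  assert (Ed : dot x (ptadd x a) = rho ^ 2 + dot x a)
    by (unfold rho; rewrite enorm_sq; unfold dot, ptadd; cbn [fst snd]; ring).
  assert (Ec : cross x (ptadd x a) = cross x a) by (unfold cross, ptadd; cbn [fst snd]; ring).
  assert (Hden : rho ^ 2 / 2 <= rho ^ 2 + dot x a) by nra.
  assert (Hy : 0 < enorm (ptadd x a)).
  { destruct (Rabs_dot_cross_le x (ptadd x a)) as [Hd' _].
    destruct (enorm_ge0 (ptadd x a)) as [|E]; [assumption|].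
    rewrite <- E, Rmult_0_r, Ed, Rabs_pos_eq in Hd' by nra. nra. }
  split.
  - unfold alpha_hat. rewrite angle_atan, Ec, Ed; [reflexivity | fold rho; lra | exact Hy |].
    rewrite Ed. nra.
  - unfold tan_step. fold rho. unfold Rdiv.
    rewrite Rabs_mult, Rabs_inv, (Rabs_pos_eq (rho ^ 2 + dot x a)) by nra.
    apply Rmult_le_reg_r with (rho * (rho ^ 2 + dot x a)); [nra|].
    replace (Rabs (cross x a) * / (rho ^ 2 + dot x a) * (rho * (rho ^ 2 + dot x a)))
      with (Rabs (cross x a) * rho) by (field; nra).
    replace (2 * / rho * (rho * (rho ^ 2 + dot x a))) with (2 * (rho ^ 2 + dot x a))
      by (field; lra).
    nra.
Qed.

Lemma atan_cubic t : Rabs (atan t - t) <= Rabs t ^ 3 /\ Rabs (atan t) <= Rabs t.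
Proof.
  destruct (MVT_gen atan 0 t (fun c => / (1 + c ^ 2))) as [c [Hc E]].
  - intros y _. apply is_derive_Reals, derivable_pt_lim_atan.
  - intros y _. apply derivable_continuous_pt, derivable_pt_atan.
  - rewrite atan_0, !Rminus_0_r in E.
    assert (Hct : c ^ 2 <= t ^ 2) by (unfold Rmin, Rmax in Hc; destruct (Rle_dec 0 t); nra).
    (* atan t = t (1 - w) with 0 <= w = c^2 / (1 + c^2) <= min (1, t^2) *)
    set (w := c ^ 2 / (1 + c ^ 2)).
    assert (Hw : 0 <= w <= t ^ 2 /\ w <= 1).
    { unfold w. split; [split|]; [apply Rdiv_le_0_compat; nra| |];
        (apply Rmult_le_reg_r with (1 + c ^ 2); [nra|]; field_simplify; nra). }
    replace (atan t) with (t * (1 - w)) by (rewrite E; unfold w; field; nra).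
    pose proof (Rabs_pos t). pose proof (pow2_abs t).
    replace (t * (1 - w) - t) with (- (t * w)) by ring.
    rewrite Rabs_Ropp, !Rabs_mult, (Rabs_pos_eq w), (Rabs_pos_eq (1 - w)) by lra.
    split; nra.
Qed.

Lemma pair_remainder_bound rho s c : 2 <= rho -> Rabs s <= rho -> Rabs c <= rho ->
  Rabs (s / (rho ^ 2 + c) - s / (rho ^ 2 - c) + 2 * s * c / rho ^ 4) <= 2 / rho ^ 3.
Proof.
  intros Hr Hs Hc. pose proof (proj1 (Rabs_le_between _ _) Hc).
  pose proof (Rabs_pos s). pose proof (Rabs_pos c).
  assert (Hr3 : 0 < rho ^ 3) by (apply pow_lt; lra).
  assert (Hc2 : c ^ 2 <= rho ^ 2) by nra.
  assert (Hr4 : 0 < rho ^ 4) by (apply pow_lt; lra).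
  assert (Hp : 0 < rho ^ 2 + c /\ 0 < rho ^ 2 - c) by (split; nra).
  assert (HD : rho ^ 7 <= rho ^ 4 * (rho ^ 4 - c ^ 2)).
  { assert (rho ^ 4 - rho ^ 2 - rho ^ 3 = rho ^ 2 * (rho * rho - rho - 1)) by ring.
    assert (0 <= rho ^ 2 * (rho * rho - rho - 1)) by (apply Rmult_le_pos; nra).
    replace (rho ^ 7) with (rho ^ 4 * rho ^ 3) by ring.
    apply Rmult_le_compat_l; lra. }
  replace (s / (rho ^ 2 + c) - s / (rho ^ 2 - c) + 2 * s * c / rho ^ 4)
    with (- (2 * s * c ^ 3) / (rho ^ 4 * (rho ^ 4 - c ^ 2))) by (field; repeat split; nra).
  unfold Rdiv. rewrite Rabs_mult, Rabs_inv, Rabs_Ropp, (Rabs_pos_eq (rho ^ 4 * (rho ^ 4 - c ^ 2))) by nra.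
  rewrite !Rabs_mult, (Rabs_pos_eq 2), <- RPow_abs by lra.
  assert (Hc3 : Rabs c ^ 3 <= rho ^ 3) by (apply pow_incr; lra).
  apply Rmult_le_reg_r with (rho ^ 3 * (rho ^ 4 * (rho ^ 4 - c ^ 2))); [nra|].
  field_simplify; [|nra|nra].
  assert (Rabs s * Rabs c ^ 3 <= rho * rho ^ 3) by (apply Rmult_le_compat; try apply pow_le; lra).
  nra.
Qed.

Lemma tan_step_pair x a : 2 <= enorm x -> enorm a = 1 ->
  Rabs (tan_step x a + tan_step x (ptopp a) + 2 * cross x a * dot x a / enorm x ^ 4)
    <= 2 / enorm x ^ 3.
Proof.
  intros Hx Ha. destruct (Rabs_dot_cross_le x a) as [Hdot Hcross].
  rewrite Ha, Rmult_1_r in Hdot, Hcross.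
  unfold tan_step.
  replace (cross x (ptopp a)) with (- cross x a) by (unfold cross, ptopp; cbn [fst snd]; ring).
  replace (dot x (ptopp a)) with (- dot x a) by (unfold dot, ptopp; cbn [fst snd]; ring).
  replace (- cross x a / (enorm x ^ 2 + - dot x a))
    with (- (cross x a / (enorm x ^ 2 - dot x a))) by (unfold Rminus, Rdiv; ring).
  apply pair_remainder_bound; assumption.
Qed.

Lemma cross_dot_hexagon_sum x :
  cross x (avec 1) * dot x (avec 1) + cross x (avec 2) * dot x (avec 2) +
  cross x (avec 3) * dot x (avec 3) = 0.
Proof.
  rewrite avec1, avec2, avec3. unfold cross, dot; cbn [fst snd].
  match goal with |- ?l = 0 =>
    replace l with (fst x * snd x * (sqrt 3 * sqrt 3 - 3) / 2) by field end.
  rewrite sqrt3_sq. field.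
Qed.

(* The leading terms [- 2 cross x a dot x a / |x|^4] of the six neighbours cancel by the
   hexagonal symmetry, leaving an [O(|x|^-3)] remainder. *)
Lemma tan_step_hexagon_sum x : 2 <= enorm x ->
  Rabs (sum_f_R0 (fun j => tan_step x (avec (S j))) 5) <= 6 / enorm x ^ 3.
Proof.
  intro Hx. assert (Hx0 : enorm x <> 0) by lra.
  set (P k := tan_step x (avec k) + tan_step x (ptopp (avec k))
              + 2 * cross x (avec k) * dot x (avec k) / enorm x ^ 4).
  assert (E : sum_f_R0 (fun j => tan_step x (avec (S j))) 5 = P 1%nat + P 2%nat + P 3%nat).
  { transitivity (P 1%nat + P 2%nat + P 3%nat - 2 * (cross x (avec 1) * dot x (avec 1)
      + cross x (avec 2) * dot x (avec 2) + cross x (avec 3) * dot x (avec 3)) / enorm x ^ 4).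
    - cbn [sum_f_R0].
      rewrite (avec_add3 1 ltac:(lia) : avec 4 = _), (avec_add3 2 ltac:(lia) : avec 5 = _),
        (avec_add3 3 ltac:(lia) : avec 6 = _).
      unfold P. field. exact Hx0.
    - rewrite cross_dot_hexagon_sum. field. exact Hx0. }
  rewrite E.
  assert (HP : forall k, Rabs (P k) <= 2 / enorm x ^ 3)
    by (intro k; apply tan_step_pair, enorm_avec; exact Hx).
  pose proof (HP 1%nat). pose proof (HP 2%nat). pose proof (HP 3%nat).
  pose proof (Rabs_triang (P 1%nat + P 2%nat) (P 3%nat)).
  pose proof (Rabs_triang (P 1%nat) (P 2%nat)). lra.
Qed.

Section FarField.

Variables (psi : R -> R) (M : R).
Hypothesis HM : 0 <= M.
Hypothesis Hcubic : forall a, Rabs a <= 1/3 ->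
  Rabs (Derive psi a - Derive_n psi 2 0 * a) <= M * Rabs a ^ 3.
Hypothesis Hmu : 0 < Derive_n psi 2 0.

Let kappa := Derive_n psi 2 0 / (2 * PI).

Lemma Derive_alpha_hat_far x a : 2 <= enorm x -> enorm a = 1 ->
  Rabs (Derive psi (alpha_hat x (ptadd x a)) - kappa * tan_step x a)
    <= 8 * (kappa + M) / enorm x ^ 3.
Proof.
  intros Hx Ha. destruct (alpha_hat_far x a Hx Ha) as [Eal Ht].
  set (t := tan_step x a) in *. set (rho := enorm x) in *.
  destruct (atan_cubic t) as [Hat1 Hat2].
  pose proof PI_RGT_0. pose proof PI2_1.
  assert (Hk : 0 <= kappa) by (apply Rdiv_le_0_compat; lra).
  assert (Hr3 : 0 < rho ^ 3) by (apply pow_lt; lra).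
  assert (Ht3 : Rabs t ^ 3 <= 8 / rho ^ 3).
  { replace (8 / rho ^ 3) with ((2 / rho) ^ 3) by (field; lra).
    apply pow_incr. split; [apply Rabs_pos | exact Ht]. }
  assert (Ht1 : Rabs t <= 1).
  { apply Rle_trans with (2 / rho); [exact Ht|].
    apply Rmult_le_reg_r with rho; [lra|]. field_simplify; lra. }
  set (al := alpha_hat x (ptadd x a)) in *.
  assert (Hal2 : Rabs al * (2 * PI) = Rabs (atan t)).
  { rewrite Eal. unfold Rdiv. rewrite Rabs_mult, Rabs_inv, (Rabs_pos_eq (2 * PI)) by lra.
    field. lra. }
  pose proof (Rabs_pos al).
  assert (Hal : Rabs al <= Rabs t) by nra.
  assert (Hal3 : Rabs al <= 1/3) by nra.
  replace (Derive psi al - kappa * t)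
    with ((Derive psi al - Derive_n psi 2 0 * al) + kappa * (atan t - t))
    by (unfold kappa; rewrite Eal; field; lra).
  eapply Rle_trans; [apply Rabs_triang|]. rewrite Rabs_mult, (Rabs_pos_eq kappa) by exact Hk.
  specialize (Hcubic al Hal3).
  assert (Rabs al ^ 3 <= Rabs t ^ 3) by (apply pow_incr; split; [apply Rabs_pos|exact Hal]).
  replace (8 * (kappa + M) / rho ^ 3) with (M * (8 / rho ^ 3) + kappa * (8 / rho ^ 3)) by (field; lra).
  apply Rplus_le_compat; nra.
Qed.

Lemma sum_Derive_alpha_hat_far x : 2 <= enorm x ->
  Rabs (sum_f_R0 (fun j => Derive psi (alpha_hat x (ptadd x (avec (S j))))) 5)
    <= 6 * (9 * kappa + 8 * M) / enorm x ^ 3.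
Proof.
  intro Hx. pose proof PI_RGT_0.
  assert (Hk : 0 <= kappa) by (apply Rdiv_le_0_compat; lra).
  assert (Hr3 : 0 < enorm x ^ 3) by (apply pow_lt; lra).
  set (f j := Derive psi (alpha_hat x (ptadd x (avec (S j))))).
  set (t j := tan_step x (avec (S j))).
  replace (sum_f_R0 f 5) with (kappa * sum_f_R0 t 5 + sum_f_R0 (fun j => f j - kappa * t j) 5)
    by (cbn [sum_f_R0]; ring).
  pose proof (tan_step_hexagon_sum x Hx) as Ht.
  pose proof (sum_f_R0_Rabs_le_const (fun j => f j - kappa * t j) 5 _
    (fun j _ => Derive_alpha_hat_far x _ Hx (enorm_avec (S j)))) as Hr.
  eapply Rle_trans; [apply Rabs_triang|]. rewrite Rabs_mult, (Rabs_pos_eq kappa) by exact Hk.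
  replace (6 * (9 * kappa + 8 * M) / enorm x ^ 3)
    with (kappa * (6 / enorm x ^ 3) + INR 6 * (8 * (kappa + M) / enorm x ^ 3))
    by (simpl; field; lra).
  apply Rplus_le_compat; [apply Rmult_le_compat_l|]; assumption.
Qed.

End FarField.

Lemma force_decay psi : potential psi -> exists C, 0 <= C /\
  forall x, Lambda x -> Rabs (force psi x) <= C / enorm x ^ 3.
Proof.
  intro Hpsi. destruct (Derive_potential_cubic psi Hpsi) as [M [HM Hcubic]].
  assert (Hmu : 0 < Derive_n psi 2 0) by apply Hpsi.
  set (mu := Derive_n psi 2 0) in *.
  exists (54 * (mu + M)). split; [lra|]. intros x Hx.
  pose proof (Lambda_enorm_pos x Hx) as Hr.
  assert (Hr3 : 0 < enorm x ^ 3) by (apply pow_lt; lra).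
  rewrite force_alpha_hat by assumption.
  destruct (Rlt_le_dec (enorm x) 2) as [Hnear|Hfar].
  - (* near the core every force term is bounded, and |x|^3 < 8 *)
    assert (Hterm : forall a, Rabs a <= 1/3 -> Rabs (Derive psi a) <= mu + M).
    { intros a Ha. specialize (Hcubic a Ha). pose proof (Rabs_pos a).
      pose proof (Rabs_triang (Derive psi a - mu * a) (mu * a)) as Ht.
      replace (Derive psi a - mu * a + mu * a) with (Derive psi a) in Ht by ring.
      rewrite Rabs_mult, (Rabs_pos_eq mu) in Ht by lra.
      assert (Rabs a ^ 3 <= 1) by nra. nra. }
    eapply Rle_trans.
    + apply sum_f_R0_Rabs_le_const. intros j Hj. apply Hterm, Rabs_le.
      pose proof (alpha_hat_bond_bound _ _ (bond_avec x (S j) Hx ltac:(lia))). lra.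
    + assert (enorm x ^ 3 <= 8) by (replace 8 with (2 ^ 3) by ring; apply pow_incr; lra).
      apply Rmult_le_reg_r with (enorm x ^ 3); [exact Hr3|].
      replace (54 * (mu + M) / enorm x ^ 3 * enorm x ^ 3) with (54 * (mu + M)) by (field; lra).
      simpl INR. nra.
  - eapply Rle_trans; [exact (sum_Derive_alpha_hat_far psi M HM Hcubic Hmu x Hfar)|].
    apply Rmult_le_compat_r; [left; apply Rinv_0_lt_compat, Hr3|].
    assert (mu / (2 * PI) <= mu).
    { pose proof PI2_1. apply Rmult_le_reg_r with (2 * PI); [lra|].
      field_simplify; nra. }
    fold mu. lra.
Qed.

Lemma Rinv_pow3_le_Rpower r : 1/2 <= r -> / r ^ 3 <= 27 * Rpower (1 + r) (- 3).
Proof.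
  intro Hr.
  replace (- 3) with (- INR 3) by (simpl; ring).
  rewrite Rpower_Ropp, Rpower_pow by lra.
  assert (Hr3 : 0 < r ^ 3) by (apply pow_lt; lra).
  assert (Hcube : (1 + r) ^ 3 <= (3 * r) ^ 3) by (apply pow_incr; lra).
  replace ((3 * r) ^ 3) with (27 * r ^ 3) in Hcube by ring.
  apply Rmult_le_reg_r with (r ^ 3 * (1 + r) ^ 3); [apply Rmult_lt_0_compat; [|apply pow_lt]; lra|].
  field_simplify; [lra|lra|pose proof (pow_lt (1 + r) 3); lra].
Qed.

Theorem lemma4p4 (psi : R -> R) (Hpsi : potential psi) :
  (exists alpha, in_class yhat alpha) /\
  (forall alpha, in_class yhat alpha ->
     forall xi eta, bond xi eta -> -1/3 <= alpha xi eta <= 1/3) /\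
  (exists C : R, forall xi, Lambda xi ->
     Rabs (force psi xi) <= C * / (enorm xi ^ 3)) /\
  (exists C1 t : R, t > 2 /\ forall xi, Lambda xi ->
     Rabs (force psi xi) <= C1 * Rpower (1 + enorm xi) (- t)).
Proof.
  destruct (force_decay psi Hpsi) as [C [HC Hdecay]].
  split; [exists alpha_hat; exact in_class_alpha_hat|].
  split.
  { intros alpha Hc xi eta B. rewrite (in_class_bond_eq alpha xi eta Hc B).
    apply alpha_hat_bond_bound, B. }
  split; [exists C; exact Hdecay|].
  exists (C * 27), 3. split; [lra|]. intros xi Hx.
  assert (Hr : 1/2 <= enorm xi) by (pose proof (Lambda_norm xi Hx); pose proof (enorm_ge0 xi); nra).
  eapply Rle_trans; [apply Hdecay, Hx|].
  rewrite Rmult_assoc. apply Rmult_le_compat_l; [exact HC|].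
  apply Rinv_pow3_le_Rpower, Hr.
Qed.
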